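(* Suppose every request of the input $\sigma$ is a triggering request with respect to ALG run on $\sigma$. For each $k\in[m]$ let $x_k$ be the position of $e_k$ in ALG's list at time $q_k$ just before ALG acts at that time. Then $$ALG(\sigma)\le 3\sum_{k=1}^m x_k.$$
   Context: List Update with Time Windows. A set $\mathbb{E}$ of $n$ elements is kept in an ordered list (position $1$ is the head). An input $\sigma$ is a sequence of requests $r_1,\dots,r_m$; request $r_k$ specifies an element $e_k\in\mathbb{E}$, an arrival time $a_k$ and a deadline $q_k\ge a_k$. An algorithm may perform an access up to position $i$ at cost $i$, serving every pending request whose element currently lies in positions $1,\dots,i$, and may swap adjacent elements at cost $1$; actions are instantaneous; every request must be served within $[a_k,q_k]$. Cost = total access cost + number of swaps. Algorithm ALG: whenever the current time equals the deadline of at least one pending request, let the triggering element be the element at the largest current position among those elements having a pending request whose deadline is the current time, and let $i$ be its position. ALG accesses the first $\min(2i-1,n)$ positions and then moves the triggering element to the front by $i-1$ adjacent swaps. At each such event the triggering request is one (arbitrarily fixed) pending request for the triggering element whose deadline is the current time. A request of $\sigma$ is a triggering request if it is the triggering request of some event of ALG on $\sigma$. *)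

From mathcomp Require Import all_boot all_order.
Set Implicit Arguments. Unset Strict Implicit. Unset Printing Implicit Defensive.
Import Order.TTheory.

(* Conventions:
   - elements are 'I_n; a list is a seq 'I_n (a permutation of enum 'I_n);
   - positions are 1-based: pos x L = index x L + 1;
   - requests are indexed by 'I_m: request k has element e k, arrival a k,
     deadline q k; times live in an arbitrary totally ordered type T
     (e.g. the reals). *)

Definition pos (n : nat) (x : 'I_n) (L : seq 'I_n) : nat := (index x L).+1.

(* Move the element at (1-based) position i to the front, keeping the
   relative order of the others (= the effect of i-1 adjacent swaps). *)
Definition move_to_front (n : nat) (i : nat) (L : seq 'I_n) : seq 'I_n :=
  rotr 1 (take i L) ++ drop i L.

Section ALG.
Variables (d : Order.disp_t) (T : orderType d) (n m : nat).
Variables (e : 'I_m -> 'I_n) (a q : 'I_m -> T) (L0 : seq 'I_n).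

Local Open Scope order_scope.

(* ALG state: current list, set of already served requests, cost so far. *)
Definition state := (seq 'I_n * {set 'I_m} * nat)%type.

Definition due (t : T) (st : state) : {set 'I_m} :=
  [set k | (a k <= t) && (k \notin st.1.2) && (q k == t)].

Definition trig_pos (t : T) (st : state) : nat :=
  (\max_(k in due t st) pos (e k) st.1.1)%N.

Definition step (t : T) (st : state) : state :=
  let: (L, Srv, c) := st in
  if due t st == set0 then st else
  let i := trig_pos t st in
  let j := minn (2 * i).-1 n in
  let served := [set k | (a k <= t) && (pos (e k) L <= j)] in
  (move_to_front i L, Srv :|: served, (c + j + i.-1)%N).

(* the (distinct) deadlines in increasing order: the only times ALG may act *)
Definition event_times : seq T := sort <=%O (undup [seq q k | k <- enum 'I_m]).

Definition init_state : state := (L0, set0, 0%N).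

Definition state_before (t : T) : state :=
  foldl (fun st t' => step t' st) init_state [seq t' <- event_times | t' < t].

Definition alg_cost : nat :=
  (foldl (fun st t' => step t' st) init_state event_times).2.

Definition is_event (t : T) : Prop :=
  t \in event_times /\ due t (state_before t) != set0.

Definition trig_candidate (t : T) (k : 'I_m) : Prop :=
  k \in due t (state_before t) /\
  pos (e k) (state_before t).1.1 = trig_pos t (state_before t).

Definition valid_choice (tr : T -> nat) : Prop :=
  forall t, is_event t -> exists k : 'I_m, tr t = val k /\ trig_candidate t k.

Definition is_triggering (tr : T -> nat) (k : 'I_m) : Prop :=
  exists t, is_event t /\ tr t = val k.

Definition xpos (k : 'I_m) : nat := pos (e k) (state_before (q k)).1.1.

End ALG.

From mathcomp Require Import all_boot all_order.
From mathcomp Require Import zify.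
Set Implicit Arguments. Unset Strict Implicit. Unset Printing Implicit Defensive.
Import Order.TTheory.

(* An event of ALG at time t with triggering element at position i costs
   min(2i-1, n) + (i-1) <= 3i.  By a valid choice of triggering request,
   i = x_k for some request k with deadline q_k = t, hence the event costs at
   most 3 times the sum of the x_k over the requests with deadline t.

   ALG only acts at the (strictly increasing) event times, and the state just
   before an event time t is the fold of the ALG step over the event times
   preceding t.  An induction along the prefixes of the event times then bounds
   the cost accumulated over a prefix s by 3 times the sum of the x_k over the
   requests whose deadline lies in s; the whole sequence gives the theorem. *)

Lemma filter_lt_prefix (d : Order.disp_t) (T : orderType d) (t : T)
    (s1 s2 : seq T) :
  sorted <%O (s1 ++ t :: s2) -> [seq t' <- s1 ++ t :: s2 | (t' < t)%O] = s1.
Proof.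
elim: s1 => [|x s1 IH] /=.
  rewrite lt_path_sortedE ltxx => /andP[t_lt_s2 _].
  rewrite -[RHS](filter_pred0 s2); apply: eq_in_filter => y /(allP t_lt_s2).
  exact: lt_gtF.
rewrite lt_path_sortedE => /andP[x_lt sorted_rest].
have -> : (x < t)%O by apply: (allP x_lt); rewrite mem_cat mem_head orbT.
by rewrite IH.
Qed.

Lemma sum_key_rcons (I : finType) (V : eqType) (key : I -> V) (w : I -> nat)
    (s : seq V) (t : V) :
  t \notin s ->
  \sum_(k | key k \in rcons s t) w k =
  \sum_(k | key k \in s) w k + \sum_(k | key k == t) w k.
Proof.
move=> t_notin_s.
rewrite big_mkcond [in RHS]big_mkcond [X in _ + X]big_mkcond -big_split.
apply: eq_bigr => k _; rewrite mem_rcons in_cons.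
case: eqP => [->|_] /=; first by rewrite (negbTE t_notin_s).
by case: (key k \in s); rewrite ?addn0.
Qed.

Section ALGCost.
Variables (d : Order.disp_t) (T : orderType d) (n m : nat).
Variables (e : 'I_m -> 'I_n) (a q : 'I_m -> T) (L0 : seq 'I_n).

Local Notation step := (step e a q).
Local Notation ET := (event_times q).
Local Notation state_before := (state_before e a q L0).
Local Notation x := (xpos e a q L0).

Definition run (s : seq T) : state n m :=
  foldl (fun st t => step t st) (init_state m L0) s.

Lemma event_times_sorted : sorted <%O ET.
Proof. by rewrite sort_lt_sorted undup_uniq. Qed.

Lemma state_before_run (s1 s2 : seq T) (t : T) :
  ET = s1 ++ t :: s2 -> state_before t = run s1.
Proof.
move=> ET_split; rewrite /state_before ET_split filter_lt_prefix //.
by rewrite -ET_split event_times_sorted.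
Qed.

Lemma step_cost (t : T) (st : state n m) :
  (step t st).2 <= st.2 + 3 * trig_pos e a q t st.
Proof.
by case: st => [[L Srv] c] /=; case: ifP => _ /=; lia.
Qed.

Lemma event_cost (tr : T -> nat) (t : T) :
  valid_choice e a q L0 tr -> t \in ET ->
  (step t (state_before t)).2 <=
  (state_before t).2 + 3 * \sum_(k < m | q k == t) x k.
Proof.
move=> valid t_in_ET.
have [no_due | some_due] := eqVneq (due a q t (state_before t)) set0.
  by case: (state_before t) no_due => [[L Srv] c] /= ->; rewrite eqxx leq_addr.
have [k [_ [k_due k_trig]]] := valid t (conj t_in_ET some_due).
have qk : q k == t by move: k_due; rewrite inE => /andP[_].
have xk : x k = trig_pos e a q t (state_before t) by rewrite /xpos (eqP qk).
apply: leq_trans (step_cost _ _) _; rewrite leq_add2l leq_mul2l -xk.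
by rewrite (bigD1 k) //= leq_addr.
Qed.

Lemma run_prefix_cost (tr : T -> nat) (s s' : seq T) :
  valid_choice e a q L0 tr -> ET = s ++ s' ->
  (run s).2 <= 3 * \sum_(k < m | q k \in s) x k.
Proof.
move=> valid; elim/last_ind: s s' => [|s t IH] s' ET_split //.
have ET_split' : ET = s ++ t :: s' by rewrite ET_split cat_rcons.
have t_notin_s : t \notin s.
  have : uniq ET by apply: (sorted_uniq lt_trans ltxx event_times_sorted).
  by rewrite ET_split' cat_uniq => /and3P[_ /norP[]].
have t_in_ET : t \in ET by rewrite ET_split' mem_cat mem_head orbT.
rewrite /run foldl_rcons -/(run s) sum_key_rcons // mulnDr.
rewrite -(state_before_run ET_split') in IH *.
apply: leq_trans (event_cost valid t_in_ET) _.
by rewrite leq_add2r (IH _ ET_split').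
Qed.

End ALGCost.

Theorem mainTheorem5 (d : Order.disp_t) (T : orderType d) (n m : nat)
  (e : 'I_m -> 'I_n) (a q : 'I_m -> T) (L0 : seq 'I_n) (tr : T -> nat) :
  perm_eq L0 (enum 'I_n) ->
  (forall k, (a k <= q k)%O) ->
  valid_choice e a q L0 tr ->
  (forall k, is_triggering e a q L0 tr k) ->
  alg_cost e a q L0 <= 3 * \sum_(k < m) xpos e a q L0 k.
Proof.
move=> _ _ valid _.
(* the whole run is the prefix ET of ET; its sum is a subsum of the total *)
have whole_run := run_prefix_cost valid (esym (cats0 (event_times q))).
apply: leq_trans whole_run _.
by rewrite leq_mul2l big_mkcond leq_sum // => k _; case: ifP.
Qed.
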